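(* Let $X$ be a Banach space of analytic functions on $\mathbb{U}$ with $H_\infty\hookrightarrow X\hookrightarrow H_2$, and let $E$ be an order-continuous Banach sequence lattice with $\ell_2\hookrightarrow E\hookrightarrow\ell_\infty$. Let $\lambda=\{\lambda_n\}$ be such that the multiplier operator $M_\lambda\colon X\to E$, $M_\lambda f=\{\lambda_n\hat f(n)\}$, is a bounded operator. Then $M_\lambda\colon X\to E$ is compact if and only if \[\limsup_{n\to\infty}|\lambda_n|=0.\]
   Context: $\mathbb{U}$ is the open unit disk, $H_p$ the classical Hardy spaces on $\mathbb{U}$, $f=\sum_{n\ge0}\hat f(n)z^n$ the Taylor expansion; ''$\hookrightarrow$'' denotes continuous inclusion. A Banach sequence lattice on $\mathbb{Z}_+$ is a Banach space $E$ of sequences with $|y_n|\le|x_n|$ for all $n$, $x\in E$ implying $y\in E$ and $\|y\|_E\le\|x\|_E$; it is order-continuous if every nonnegative nonincreasing sequence in $E$ converging to $0$ pointwise converges to $0$ in norm. *)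

From Stdlib Require Import Reals.
From Coquelicot Require Import Coquelicot.
Open Scope R_scope.

(* An analytic function on the unit disk U is identified with its Taylor
   coefficient sequence a = (hat f(n))_n; f(z) = sum_n a n z^n. *)
Definition cseq := nat -> C.

Definition seq_add (a b : cseq) : cseq := fun n => Cplus (a n) (b n).
Definition seq_sub (a b : cseq) : cseq := fun n => Cminus (a n) (b n).
Definition seq_scal (c : C) (a : cseq) : cseq := fun n => Cmult c (a n).
Definition seq_zero : cseq := fun _ => RtoC 0.

(* the power series converges at every point of the open unit disk,
   i.e. it defines an analytic function on U *)
Definition analytic_on_disk (a : cseq) : Prop :=
  forall z : C, Cmod z < 1 -> ex_series (fun n => Cmult (a n) (Cpow z n)).

Definition sup_bounded_by (a : cseq) (M : R) : Prop :=
  forall z : C, Cmod z < 1 ->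
  forall l : C, is_series (fun n => Cmult (a n) (Cpow z n)) l -> Cmod l <= M.

Definition in_Hinf (a : cseq) : Prop :=
  analytic_on_disk a /\ exists M, sup_bounded_by a M.

(* f in H_2 (resp. a sequence in l_2): sum |a_n|^2 < oo *)
Definition in_l2 (a : cseq) : Prop :=
  ex_series (fun n => (Cmod (a n))^2).

Definition l2_norm (a : cseq) : R :=
  sqrt (Series (fun n => (Cmod (a n))^2)).

Record Banach_seq_space (S : cseq -> Prop) (N : cseq -> R) : Prop := {
  bs_zero : S seq_zero;
  bs_add : forall a b, S a -> S b -> S (seq_add a b);
  bs_scal : forall c a, S a -> S (seq_scal c a);
  bs_nonneg : forall a, S a -> 0 <= N a;
  bs_definite : forall a, S a -> N a = 0 -> a = seq_zero;
  bs_homog : forall c a, S a -> N (seq_scal c a) = Cmod c * N a;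
  bs_triangle : forall a b, S a -> S b -> N (seq_add a b) <= N a + N b;
  bs_complete : forall u : nat -> cseq, (forall k, S (u k)) ->
    (forall eps, 0 < eps -> exists K, forall k m, (K <= k)%nat -> (K <= m)%nat ->
        N (seq_sub (u k) (u m)) < eps) ->
    exists v, S v /\ is_lim_seq (fun k => N (seq_sub (u k) v)) 0
}.

Definition Banach_space_of_analytic (S : cseq -> Prop) (N : cseq -> R) : Prop :=
  Banach_seq_space S N /\ forall a, S a -> analytic_on_disk a.

Definition Hinf_incl (S : cseq -> Prop) (N : cseq -> R) : Prop :=
  exists K, 0 <= K /\ forall a M, in_Hinf a -> sup_bounded_by a M ->
     S a /\ N a <= K * M.

Definition incl_l2 (S : cseq -> Prop) (N : cseq -> R) : Prop :=
  exists K, 0 <= K /\ forall a, S a -> in_l2 a /\ l2_norm a <= K * N a.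

Definition l2_incl (S : cseq -> Prop) (N : cseq -> R) : Prop :=
  exists K, 0 <= K /\ forall a, in_l2 a -> S a /\ N a <= K * l2_norm a.

Definition incl_linf (S : cseq -> Prop) (N : cseq -> R) : Prop :=
  exists K, 0 <= K /\ forall a, S a -> forall n, Cmod (a n) <= K * N a.

Definition Banach_seq_lattice (S : cseq -> Prop) (N : cseq -> R) : Prop :=
  Banach_seq_space S N /\
  forall x y : cseq, S x -> (forall n, Cmod (y n) <= Cmod (x n)) ->
     S y /\ N y <= N x.

Definition order_continuous (SE : cseq -> Prop) (N : cseq -> R) : Prop :=
  forall u : nat -> nat -> R,
    (forall k, SE (fun n => RtoC (u k n))) ->
    (forall k n, 0 <= u k n) ->
    (forall k n, u (S k) n <= u k n) ->
    (forall n, is_lim_seq (fun k => u k n) 0) ->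
    is_lim_seq (fun k => N (fun n => RtoC (u k n))) 0.

Definition multiplier (lam : cseq) (a : cseq) : cseq :=
  fun n => Cmult (lam n) (a n).

Definition bounded_multiplier (SX : cseq -> Prop) (NX : cseq -> R)
    (SE : cseq -> Prop) (NE : cseq -> R) (lam : cseq) : Prop :=
  (forall a, SX a -> SE (multiplier lam a)) /\
  exists K, 0 <= K /\ forall a, SX a -> NE (multiplier lam a) <= K * NX a.

(* M_lambda : X -> E is compact: the image of the unit ball is relatively
   compact in E (sequential form, as E is a metric space) *)
Definition compact_multiplier (SX : cseq -> Prop) (NX : cseq -> R)
    (SE : cseq -> Prop) (NE : cseq -> R) (lam : cseq) : Prop :=
  forall f : nat -> cseq, (forall k, SX (f k)) -> (forall k, NX (f k) <= 1) ->
    exists (phi : nat -> nat) (g : cseq),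
      (forall k, (phi k < phi (S k))%nat) /\ SE g /\
      is_lim_seq (fun k => NE (seq_sub (multiplier lam (f (phi k))) g)) 0.

From Stdlib Require Import Reals Lra Lia Classical ClassicalEpsilon FunctionalExtensionality.
From Coquelicot Require Import Coquelicot.
Open Scope R_scope.

(* If |lam_n| does not tend to 0, pick indices n_k with |lam_(n_k)| >= eta.
   The normalised monomials z^(n_k) / ||z^(n_k)||_X lie in the unit ball of X,
   and H_inf -> X -> H_2 keeps their norms between two positive constants.
   Their images under M_lam are disjointly supported, so by E -> l_inf any two
   of them are at E-distance bounded below by a fixed multiple of eta: no
   subsequence of the images converges in E.

   Conversely, if lam_n -> 0, a bounded sequence in X is bounded in l_2, and a
   diagonal argument gives a subsequence on which M_lam f_k is Cauchy in l_2:
   finitely many coordinates converge by Bolzano-Weierstrass, and the tail is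
   uniformly small because |lam_n| is.  Then l_2 -> E makes it Cauchy in E,
   and completeness of E provides the limit. *)

Lemma is_series_single {K : AbsRing} {V : NormedModule K} (a : nat -> V) (n0 : nat) :
  (forall m, m <> n0 -> a m = zero) -> is_series a (a n0).
Proof.
  intros Ha.
  assert (Hsum : forall N, sum_n a N = if Nat.ltb N n0 then zero else a n0).
  { induction N as [|N IH].
    - rewrite sum_O. destruct (Nat.ltb_spec 0 n0).
      + apply Ha. lia.
      + replace n0 with 0%nat by lia. reflexivity.
    - rewrite sum_Sn, IH.
      destruct (Nat.ltb_spec N n0), (Nat.ltb_spec (S N) n0); try lia.
      + rewrite Ha by lia. apply plus_zero_l.
      + replace n0 with (S N) by lia. apply plus_zero_l.
      + rewrite (Ha (S N)) by lia. apply plus_zero_r. }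
  apply filterlim_ext_loc with (f := fun _ => a n0); [|apply filterlim_const].
  exists n0. intros N HN. rewrite Hsum. destruct (Nat.ltb_spec N n0); [lia|reflexivity].
Qed.

Section NonnegSeries.

Variable a : nat -> R.
Hypothesis a_ge0 : forall n, 0 <= a n.
Hypothesis a_ex : ex_series a.

Lemma sum_f_R0_le_Series N : sum_f_R0 a N <= Series a.
Proof.
  apply sum_incr; [|exact a_ge0].
  apply is_series_Reals, Series_correct, a_ex.
Qed.

Lemma term_le_Series n : a n <= Series a.
Proof.
  eapply Rle_trans; [|apply (sum_f_R0_le_Series n)].
  destruct n as [|n]; [apply Rle_refl|].
  rewrite tech5. pose proof (cond_pos_sum a n a_ge0). lra.
Qed.

Lemma Series_tail_le N : Series (fun k => a (N + k)%nat) <= Series a.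
Proof.
  destruct N as [|N]; [apply Rle_refl|].
  rewrite (Series_incr_n a (S N)) by (lia || exact a_ex).
  pose proof (cond_pos_sum a N a_ge0). simpl pred. lra.
Qed.

End NonnegSeries.

Lemma sqrt_plus_le x y : 0 <= x -> 0 <= y -> sqrt (x + y) <= sqrt x + sqrt y.
Proof.
  intros Hx Hy.
  pose proof (sqrt_pos x). pose proof (sqrt_pos y).
  rewrite <- (sqrt_pow2 (sqrt x + sqrt y)) by lra.
  apply sqrt_le_1_alt.
  replace ((sqrt x + sqrt y) ^ 2) with (sqrt x ^ 2 + sqrt y ^ 2 + 2 * sqrt x * sqrt y) by ring.
  rewrite !pow2_sqrt by assumption. nra.
Qed.

Lemma Cmod_sub_le (u v : C) : Cmod (u - v) <= Cmod u + Cmod v.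
Proof. unfold Cminus. rewrite <- (Cmod_opp v). apply Cmod_triangle. Qed.

Lemma Series_sq_nonneg (a : cseq) : in_l2 a -> 0 <= Series (fun n => Cmod (a n) ^ 2).
Proof.
  intros Ha. eapply Rle_trans; [|apply (term_le_Series _ (fun n => pow2_ge_0 _) Ha 0)].
  apply pow2_ge_0.
Qed.

Lemma coef_le_l2_norm (a : cseq) n : in_l2 a -> Cmod (a n) <= l2_norm a.
Proof.
  intros Ha. unfold l2_norm. rewrite <- (sqrt_pow2 (Cmod (a n))) by apply Cmod_ge_0.
  apply sqrt_le_1_alt, (term_le_Series (fun n => Cmod (a n) ^ 2)); [|exact Ha].
  intros m. apply pow2_ge_0.
Qed.

Lemma Series_sq_le (a : cseq) K : in_l2 a -> l2_norm a <= K ->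
  Series (fun n => Cmod (a n) ^ 2) <= K ^ 2.
Proof.
  intros Ha HK. unfold l2_norm in HK.
  rewrite <- (pow2_sqrt (Series _)) by (apply Series_sq_nonneg, Ha).
  apply pow_incr. split; [apply sqrt_pos|exact HK].
Qed.

Lemma in_l2_sub (a b : cseq) : in_l2 a -> in_l2 b ->
  in_l2 (seq_sub a b) /\
  Series (fun n => Cmod (seq_sub a b n) ^ 2) <=
    2 * (Series (fun n => Cmod (a n) ^ 2) + Series (fun n => Cmod (b n) ^ 2)).
Proof.
  intros Ha Hb.
  set (s := fun n => 2 * (Cmod (a n) ^ 2 + Cmod (b n) ^ 2)).
  assert (Hs : ex_series s).
  { apply (ex_series_scal_l 2 (fun n => Cmod (a n) ^ 2 + Cmod (b n) ^ 2)).
    apply (ex_series_plus (fun n => Cmod (a n) ^ 2) (fun n => Cmod (b n) ^ 2)); assumption. }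
  assert (Hpt : forall n, 0 <= Cmod (seq_sub a b n) ^ 2 <= s n).
  { intros n. split; [apply pow2_ge_0|]. unfold s, seq_sub.
    pose proof (Cmod_sub_le (a n) (b n)) as Htri.
    pose proof (Cmod_ge_0 (a n - b n)).
    apply Rle_trans with ((Cmod (a n) + Cmod (b n)) ^ 2); [apply pow_incr; lra|].
    pose proof (pow2_ge_0 (Cmod (a n) - Cmod (b n))). nra. }
  split.
  - apply (@ex_series_le R_AbsRing R_CompleteNormedModule _ s); [|exact Hs].
    intros n. apply Rabs_le_between. pose proof (Hpt n). lra.
  - eapply Rle_trans; [apply Series_le; [exact Hpt|exact Hs]|].
    unfold s. rewrite Series_scal_l, Series_plus by assumption. apply Rle_refl.
Qed.

Lemma in_l2_multiplier_head_tail (lam a : cseq) N eta :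
  in_l2 a -> (forall n, (N < n)%nat -> Cmod (lam n) <= eta) ->
  in_l2 (multiplier lam a) /\
  Series (fun n => Cmod (multiplier lam a n) ^ 2) <=
    sum_f_R0 (fun n => Cmod (multiplier lam a n) ^ 2) N
    + eta ^ 2 * Series (fun n => Cmod (a n) ^ 2).
Proof.
  intros Ha Hlam.
  set (b := fun n => Cmod (multiplier lam a n) ^ 2).
  set (t := fun k => eta ^ 2 * Cmod (a (S N + k)%nat) ^ 2).
  assert (Ht : ex_series t).
  { apply (ex_series_scal_l (eta ^ 2) (fun k => Cmod (a (S N + k)%nat) ^ 2)).
    apply (ex_series_incr_n (fun n => Cmod (a n) ^ 2)), Ha. }
  assert (Hpt : forall k, 0 <= b (S N + k)%nat <= t k).
  { intros k. unfold b, t, multiplier. rewrite Cmod_mult, Rpow_mult_distr.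
    split; [apply Rmult_le_pos; apply pow2_ge_0|].
    apply Rmult_le_compat_r; [apply pow2_ge_0|].
    apply pow_incr. split; [apply Cmod_ge_0|]. apply Hlam. lia. }
  assert (Hb : ex_series b).
  { apply (ex_series_incr_n b (S N)).
    apply (@ex_series_le R_AbsRing R_CompleteNormedModule _ t); [|exact Ht].
    intros k. apply Rabs_le_between. pose proof (Hpt k). lra. }
  split; [exact Hb|].
  rewrite (Series_incr_n b (S N)) by (lia || exact Hb). simpl pred.
  apply Rplus_le_compat_l.
  eapply Rle_trans; [apply Series_le; [exact Hpt|exact Ht]|].
  unfold t. rewrite Series_scal_l. apply Rmult_le_compat_l; [apply pow2_ge_0|].
  apply (Series_tail_le (fun n => Cmod (a n) ^ 2)); [intros; apply pow2_ge_0|exact Ha].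
Qed.

Definition infinitely (P : nat -> Prop) : Prop :=
  forall N, exists k, (N <= k)%nat /\ P k.

Definition increasing_seq (phi : nat -> nat) : Prop :=
  forall k, (phi k < phi (S k))%nat.

Lemma increasing_seq_lt phi : increasing_seq phi -> forall i j, (i < j)%nat -> (phi i < phi j)%nat.
Proof.
  intros Hphi i j Hij. induction Hij as [|j Hij IH]; [apply Hphi|].
  specialize (Hphi j). lia.
Qed.

Lemma infinitely_split (P A : nat -> Prop) : infinitely P ->
  infinitely (fun k => P k /\ A k) \/ infinitely (fun k => P k /\ ~ A k).
Proof.
  intros HP. destruct (classic (infinitely (fun k => P k /\ A k))) as [H|H]; [left; exact H|right].
  apply not_all_ex_not in H. destruct H as [N0 HN0].
  intros N. destruct (HP (Nat.max N N0)) as [k [Hk Pk]].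
  exists k. split; [lia|]. split; [exact Pk|].
  intros Ak. apply HN0. exists k. split; [lia|auto].
Qed.

Lemma increasing_selection (P : nat -> nat -> Prop) :
  (forall j, infinitely (P j)) -> exists phi, increasing_seq phi /\ forall j, P j (phi j).
Proof.
  intros HP.
  set (next := fun j N => proj1_sig (constructive_indefinite_description _ (HP j N))).
  assert (Hnext : forall j N, (N <= next j N)%nat /\ P j (next j N)).
  { intros j N. exact (proj2_sig (constructive_indefinite_description _ (HP j N))). }
  set (phi := fix phi j := match j with O => next O O | S j' => next (S j') (S (phi j')) end).
  exists phi. split.
  - intros k. exact (proj1 (Hnext (S k) _)).
  - intros [|j]; apply Hnext.
Qed.

(* Sequential total boundedness of the "distance" [D] between indices: every
   infinite set of indices has infinite subsets of arbitrarily small diameter. *)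
Definition refinable (D : nat -> nat -> R) : Prop :=
  forall P, infinitely P -> forall e, 0 < e ->
  exists Q, infinitely Q /\ (forall k, Q k -> P k) /\
    (forall k m, Q k -> Q m -> D k m <= e).

Lemma refinable_cauchy_subseq (D : nat -> nat -> R) : refinable D ->
  exists phi, increasing_seq phi /\
    forall eps, 0 < eps -> exists K, forall i j, (K <= i)%nat -> (K <= j)%nat ->
      D (phi i) (phi j) < eps.
Proof.
  intros HD.
  assert (Hstep : forall (P : {P | infinitely P}) (j : nat),
    {Q : {Q | infinitely Q} | (forall k, proj1_sig Q k -> proj1_sig P k) /\
       forall k m, proj1_sig Q k -> proj1_sig Q m -> D k m <= (/2) ^ j}).
  { intros [P HP] j. apply constructive_indefinite_description.
    destruct (HD P HP ((/2) ^ j)) as [Q [HQ [HQP HQD]]]; [apply pow_lt; lra|].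
    exists (exist _ Q HQ). split; assumption. }
  (* Diagonal argument: a nested chain of infinite index sets, the (j+1)-st of
     diameter at most 2^-j, and [phi j] chosen in the (j+1)-st. *)
  set (top := exist infinitely (fun _ => True) (fun N => ex_intro _ N (conj (le_n N) I))).
  set (Ps := fix Ps j := match j with O => top | S j' => proj1_sig (Hstep (Ps j') j') end).
  assert (Hnest : forall i j k, (i <= j)%nat -> proj1_sig (Ps j) k -> proj1_sig (Ps i) k).
  { intros i j k Hij. induction Hij as [|j Hij IH]; [auto|].
    intros Hk. apply IH. exact (proj1 (proj2_sig (Hstep (Ps j) j)) k Hk). }
  destruct (increasing_selection (fun j => proj1_sig (Ps (S j))))
    as [phi [Hphi HPs]]; [intros j; apply proj2_sig|].
  exists phi. split; [exact Hphi|].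
  intros eps Heps.
  destruct (pow_lt_1_zero (/2) ltac:(rewrite Rabs_pos_eq; lra) eps Heps) as [K HK].
  specialize (HK K (le_n K)). rewrite Rabs_pos_eq in HK by (apply pow_le; lra).
  exists K. intros i j Hi Hj.
  eapply Rle_lt_trans; [|exact HK].
  apply (proj2 (proj2_sig (Hstep (Ps K) K))).
  - change (proj1_sig (Ps (S K)) (phi i)). apply Hnest with (S i); [lia|apply HPs].
  - change (proj1_sig (Ps (S K)) (phi j)). apply Hnest with (S j); [lia|apply HPs].
Qed.

Lemma refinable_approx (D : nat -> nat -> R) :
  (forall e, 0 < e -> exists D', refinable D' /\ forall k m, D k m <= D' k m + e) ->
  refinable D.
Proof.
  intros HD P HP e He.
  destruct (HD (e / 2) ltac:(lra)) as [D' [HD' Hle]].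
  destruct (HD' P HP (e / 2) ltac:(lra)) as [Q [HQ [HQP HQD]]].
  exists Q. split; [exact HQ|]. split; [exact HQP|].
  intros k m Qk Qm. specialize (Hle k m). specialize (HQD k m Qk Qm). lra.
Qed.

Lemma refinable_le (D D' : nat -> nat -> R) :
  refinable D -> (forall k m, D' k m <= D k m) -> refinable D'.
Proof.
  intros HD Hle. apply refinable_approx. intros e He. exists D. split; [exact HD|].
  intros k m. specialize (Hle k m). lra.
Qed.

Lemma refinable_add (D1 D2 : nat -> nat -> R) :
  refinable D1 -> refinable D2 -> refinable (fun k m => D1 k m + D2 k m).
Proof.
  intros H1 H2 P HP e He.
  destruct (H1 P HP (e / 2) ltac:(lra)) as [Q1 [HQ1 [HQ1P HQ1D]]].
  destruct (H2 Q1 HQ1 (e / 2) ltac:(lra)) as [Q2 [HQ2 [HQ2P HQ2D]]].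
  exists Q2. split; [exact HQ2|]. split; [auto|].
  intros k m Qk Qm. specialize (HQ2D k m Qk Qm). specialize (HQ1D k m (HQ2P k Qk) (HQ2P m Qm)). lra.
Qed.

Lemma refinable_scal (c : R) (D : nat -> nat -> R) :
  0 <= c -> refinable D -> refinable (fun k m => c * D k m).
Proof.
  intros Hc HD P HP e He.
  destruct (HD P HP (e / (c + 1))) as [Q [HQ [HQP HQD]]]; [apply Rdiv_lt_0_compat; lra|].
  exists Q. split; [exact HQ|]. split; [exact HQP|].
  intros k m Qk Qm. specialize (HQD k m Qk Qm).
  apply Rle_trans with (c * (e / (c + 1))); [apply Rmult_le_compat_l; assumption|].
  apply (Rmult_le_reg_r (c + 1)); [lra|]. field_simplify; [nra|lra].
Qed.

Lemma refinable_sqrt (D : nat -> nat -> R) :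
  refinable D -> refinable (fun k m => sqrt (D k m)).
Proof.
  intros HD P HP e He.
  destruct (HD P HP (e ^ 2)) as [Q [HQ [HQP HQD]]]; [apply pow_lt, He|].
  exists Q. split; [exact HQ|]. split; [exact HQP|].
  intros k m Qk Qm. rewrite <- (sqrt_pow2 e) by lra. apply sqrt_le_1_alt, HQD; assumption.
Qed.

Lemma refinable_sum (D : nat -> nat -> nat -> R) N :
  (forall n, refinable (D n)) -> refinable (fun k m => sum_f_R0 (fun n => D n k m) N).
Proof.
  intros HD. induction N as [|N IH]; [apply HD|].
  apply (refinable_add _ _ IH (HD (S N))).
Qed.

Section Bisection.

Variable r : nat -> R.

Lemma bisect_step P lo w : infinitely P -> (forall k, P k -> lo <= r k <= lo + w) ->
  exists Q lo', infinitely Q /\ (forall k, Q k -> P k) /\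
    forall k, Q k -> lo' <= r k <= lo' + w * / 2.
Proof.
  intros HP Hb.
  destruct (infinitely_split P (fun k => r k <= lo + w * / 2) HP) as [H|H];
    [exists (fun k => P k /\ r k <= lo + w * / 2), lo
    |exists (fun k => P k /\ ~ r k <= lo + w * / 2), (lo + w * / 2)];
    (split; [exact H|]); (split; [intros k Hk; apply Hk|]);
    intros k [Pk Hk]; specialize (Hb k Pk); lra.
Qed.

Lemma bisect n P lo w : infinitely P -> (forall k, P k -> lo <= r k <= lo + w) ->
  exists Q lo', infinitely Q /\ (forall k, Q k -> P k) /\
    forall k, Q k -> lo' <= r k <= lo' + w * (/ 2) ^ n.
Proof.
  revert P lo w. induction n as [|n IH]; intros P lo w HP Hb.
  - exists P, lo. split; [exact HP|]. split; [auto|]. intros k Hk. rewrite pow_O, Rmult_1_r. auto.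
  - destruct (bisect_step P lo w HP Hb) as [Q1 [lo1 [HQ1 [HQ1P HQ1b]]]].
    destruct (IH Q1 lo1 (w * / 2) HQ1 HQ1b) as [Q [lo' [HQ [HQP HQb]]]].
    exists Q, lo'. split; [exact HQ|]. split; [auto|].
    intros k Hk. specialize (HQb k Hk). rewrite <- tech_pow_Rmult. lra.
Qed.

Lemma refinable_bounded_real B : (forall k, Rabs (r k) <= B) ->
  refinable (fun k m => Rabs (r k - r m)).
Proof.
  intros Hb P HP e He.
  assert (HB : 0 <= B) by (specialize (Hb O); pose proof (Rabs_pos (r O)); lra).
  destruct (pow_lt_1_zero (/ 2) ltac:(rewrite Rabs_pos_eq; lra) (e / (2 * B + 1)))
    as [n Hn]; [apply Rdiv_lt_0_compat; lra|].
  specialize (Hn n (le_n n)). rewrite Rabs_pos_eq in Hn by (apply pow_le; lra).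
  destruct (bisect n P (- B) (2 * B) HP) as [Q [lo [HQ [HQP HQb]]]].
  { intros k _. specialize (Hb k). apply Rabs_le_between in Hb. lra. }
  exists Q. split; [exact HQ|]. split; [exact HQP|].
  intros k m Qk Qm. pose proof (HQb k Qk). pose proof (HQb m Qm).
  assert (Hw : 2 * B * (/ 2) ^ n <= e).
  { apply Rmult_lt_compat_l with (r := 2 * B + 1) in Hn; [|lra].
    replace ((2 * B + 1) * (e / (2 * B + 1))) with e in Hn by (field; lra).
    pose proof (pow_le (/ 2) n ltac:(lra)). nra. }
  apply Rabs_le. lra.
Qed.

End Bisection.

Lemma Cmod_le_Rabs_re_im (u : C) : Cmod u <= Rabs (fst u) + Rabs (snd u).
Proof.
  unfold Cmod. rewrite <- (sqrt_pow2 (Rabs (fst u) + Rabs (snd u)))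
    by (pose proof (Rabs_pos (fst u)); pose proof (Rabs_pos (snd u)); lra).
  apply sqrt_le_1_alt. rewrite <- (pow2_abs (fst u)), <- (pow2_abs (snd u)).
  pose proof (Rabs_pos (fst u)). pose proof (Rabs_pos (snd u)). nra.
Qed.

Lemma refinable_bounded_complex (z : nat -> C) B : (forall k, Cmod (z k) <= B) ->
  refinable (fun k m => Cmod (z k - z m) ^ 2).
Proof.
  intros Hb.
  assert (Hdist : refinable (fun k m => Cmod (z k - z m))).
  { apply refinable_le with
      (fun k m => Rabs (fst (z k) - fst (z m)) + Rabs (snd (z k) - snd (z m))).
    - apply refinable_add; apply refinable_bounded_real with B; intros k;
        eapply Rle_trans; [|apply (Hb k)| |apply (Hb k)].
      + apply re_le_Cmod.
      + eapply Rle_trans; [apply Rmax_r|apply Rmax_Cmod].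
    - intros k m. apply Cmod_le_Rabs_re_im. }
  apply refinable_le with (fun k m => 2 * B * Cmod (z k - z m)).
  - apply refinable_scal; [|exact Hdist].
    specialize (Hb O). pose proof (Cmod_ge_0 (z O)). lra.
  - intros k m. pose proof (Cmod_sub_le (z k) (z m)). pose proof (Cmod_ge_0 (z k - z m)).
    pose proof (Hb k). pose proof (Hb m). simpl. nra.
Qed.

Lemma LimSup_seq_nonneg_eq0 (u : nat -> R) : (forall n, 0 <= u n) ->
  LimSup_seq u = 0 <-> is_lim_seq u 0.
Proof.
  intros Hu. split.
  - intros HL. pose proof (proj2_sig (ex_LimSup_seq u)) as H.
    unfold LimSup_seq in HL. rewrite HL in H.
    apply is_lim_seq_spec. intros eps. destruct (H eps) as [_ [N HN]].
    exists N. intros n Hn. specialize (HN n Hn). specialize (Hu n).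
    rewrite Rminus_0_r, Rabs_pos_eq by exact Hu. simpl in HN. lra.
  - intros Hl. apply is_LimSup_seq_unique, is_lim_LimSup_seq, Hl.
Qed.

Lemma is_lim_seq_of_subsequences (u : nat -> R) (l : R) :
  (forall nn, increasing_seq nn ->
     exists phi, increasing_seq phi /\ is_lim_seq (fun k => u (nn (phi k))) l) ->
  is_lim_seq u l.
Proof.
  intros Hsub. apply is_lim_seq_spec. intros eps. apply NNPP. intros Hnot.
  assert (Hfar : infinitely (fun n => eps <= Rabs (u n - l))).
  { intros N. apply NNPP. intros Hno. apply Hnot. exists N. intros n Hn.
    apply Rnot_le_lt. intros Hle. apply Hno. exists n. split; assumption. }
  destruct (increasing_selection (fun _ n => eps <= Rabs (u n - l)) (fun _ => Hfar))
    as [nn [Hnn Hsel]].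
  destruct (Hsub nn Hnn) as [phi [_ Hl]]. apply is_lim_seq_spec in Hl.
  destruct (Hl eps) as [K HK]. specialize (HK K (le_n K)). specialize (Hsel (phi K)).
  simpl in HK. lra.
Qed.

Lemma multiplier_sub (lam a b : cseq) :
  multiplier lam (seq_sub a b) = seq_sub (multiplier lam a) (multiplier lam b).
Proof.
  apply functional_extensionality. intros n. unfold multiplier, seq_sub.
  apply injective_projections; simpl; ring.
Qed.

Lemma l2_norm_multiplier_sub_le (lam a b : cseq) N eta B :
  in_l2 a -> in_l2 b -> l2_norm a <= B -> l2_norm b <= B -> 0 <= eta ->
  (forall n, (N < n)%nat -> Cmod (lam n) <= eta) ->
  let d := seq_sub (multiplier lam a) (multiplier lam b) in
  in_l2 d /\ l2_norm d <= sqrt (sum_f_R0 (fun n => Cmod (d n) ^ 2) N) + 2 * eta * B.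
Proof.
  intros Ha Hb HaB HbB Heta Hlam d. unfold d. rewrite <- multiplier_sub.
  destruct (in_l2_sub a b Ha Hb) as [Hab Sab].
  destruct (in_l2_multiplier_head_tail lam (seq_sub a b) N eta Hab Hlam) as [Hd Sd].
  split; [exact Hd|].
  assert (HB : 0 <= B) by (eapply Rle_trans; [apply sqrt_pos|exact HaB]).
  pose proof (Series_sq_le a B Ha HaB). pose proof (Series_sq_le b B Hb HbB).
  set (head := sum_f_R0 (fun n => Cmod (multiplier lam (seq_sub a b) n) ^ 2) N) in *.
  assert (Hhead : 0 <= head) by (apply cond_pos_sum; intros; apply pow2_ge_0).
  unfold l2_norm. rewrite <- (sqrt_pow2 (2 * eta * B)) by (apply Rmult_le_pos; lra).
  eapply Rle_trans; [|apply sqrt_plus_le; [exact Hhead|apply pow2_ge_0]].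
  apply sqrt_le_1_alt. eapply Rle_trans; [exact Sd|]. apply Rplus_le_compat_l.
  apply Rle_trans with (eta ^ 2 * (2 * (B ^ 2 + B ^ 2))).
  - apply Rmult_le_compat_l; [apply pow2_ge_0|lra].
  - right. ring.
Qed.

Lemma vanishing_eventually_le (lam : cseq) eta :
  is_lim_seq (fun n => Cmod (lam n)) 0 -> 0 < eta ->
  exists N, forall n, (N < n)%nat -> Cmod (lam n) <= eta.
Proof.
  intros Hlam Heta. apply is_lim_seq_spec in Hlam.
  destruct (Hlam (mkposreal eta Heta)) as [N HN]. exists N. intros n Hn.
  specialize (HN n ltac:(lia)). simpl in HN. rewrite Rminus_0_r, Rabs_pos_eq in HN by apply Cmod_ge_0.
  lra.
Qed.

Lemma compact_multiplier_of_vanishing SX NX SE NE lam :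
  Banach_seq_space SE NE -> l2_incl SE NE -> incl_l2 SX NX ->
  (forall a, SX a -> SE (multiplier lam a)) ->
  is_lim_seq (fun n => Cmod (lam n)) 0 ->
  compact_multiplier SX NX SE NE lam.
Proof.
  intros HE [KE [HKE Hl2E]] [KX [HKX HXl2]] HM Hlam f Hf Hf1.
  assert (Hfl2 : forall k, in_l2 (f k) /\ l2_norm (f k) <= KX).
  { intros k. destruct (HXl2 _ (Hf k)) as [H1 H2]. split; [exact H1|].
    specialize (Hf1 k). nra. }
  set (d := fun k m => seq_sub (multiplier lam (f k)) (multiplier lam (f m))).
  assert (Hdiff : forall eta, 0 < eta -> exists N, forall k m,
    in_l2 (d k m) /\
    l2_norm (d k m) <= sqrt (sum_f_R0 (fun n => Cmod (d k m n) ^ 2) N) + 2 * eta * KX).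
  { intros eta Heta. destruct (vanishing_eventually_le lam eta Hlam Heta) as [N HN].
    exists N. intros k m.
    apply (l2_norm_multiplier_sub_le lam (f k) (f m)); try apply Hfl2; [lra|exact HN]. }
  assert (HD : refinable (fun k m => l2_norm (d k m))).
  { apply refinable_approx. intros e He.
    destruct (Hdiff (e / (2 * KX + 1))) as [N HN]; [apply Rdiv_lt_0_compat; lra|].
    exists (fun k m => sqrt (sum_f_R0 (fun n => Cmod (d k m n) ^ 2) N)). split.
    - apply refinable_sqrt, refinable_sum. intros n.
      apply (refinable_bounded_complex (fun k => multiplier lam (f k) n) (Cmod (lam n) * KX)).
      intros k. unfold multiplier. rewrite Cmod_mult.
      apply Rmult_le_compat_l; [apply Cmod_ge_0|].
      eapply Rle_trans; [apply coef_le_l2_norm|]; apply Hfl2.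
    - intros k m. eapply Rle_trans; [apply HN|]. apply Rplus_le_compat_l.
      apply (Rmult_le_reg_r (2 * KX + 1)); [lra|]. field_simplify; nra. }
  destruct (refinable_cauchy_subseq (fun k m => NE (d k m))) as [phi [Hphi Hcau]].
  { apply refinable_le with (fun k m => KE * l2_norm (d k m)); [apply refinable_scal; assumption|].
    intros k m. destruct (Hdiff 1 Rlt_0_1) as [N HN]. apply Hl2E, HN. }
  destruct (bs_complete _ _ HE (fun k => multiplier lam (f (phi k)))) as [g [Hg Hlim]].
  - intros k. apply HM, Hf.
  - exact Hcau.
  - exists phi, g. split; [exact Hphi|]. split; assumption.
Qed.

Section BanachSeqSpace.

Variables (SB : cseq -> Prop) (NB : cseq -> R).
Hypothesis HB : Banach_seq_space SB NB.

Lemma seq_sub_add_opp (a b : cseq) : seq_sub a b = seq_add a (seq_scal (RtoC (-1)) b).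
Proof.
  apply functional_extensionality. intros n. unfold seq_add, seq_sub, seq_scal.
  apply injective_projections; simpl; ring.
Qed.

Lemma bs_sub a b : SB a -> SB b -> SB (seq_sub a b).
Proof.
  intros Ha Hb. rewrite seq_sub_add_opp. apply (bs_add _ _ HB); [exact Ha|].
  apply (bs_scal _ _ HB), Hb.
Qed.

Lemma bs_sub_le a b g : SB a -> SB b -> SB g ->
  NB (seq_sub a b) <= NB (seq_sub a g) + NB (seq_sub b g).
Proof.
  intros Ha Hb Hg.
  assert (Hab : seq_sub a b = seq_add (seq_sub a g) (seq_scal (RtoC (-1)) (seq_sub b g))).
  { apply functional_extensionality. intros n. unfold seq_add, seq_sub, seq_scal.
    apply injective_projections; simpl; ring. }
  rewrite Hab. eapply Rle_trans; [apply (bs_triangle _ _ HB)|].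
  - apply bs_sub; assumption.
  - apply (bs_scal _ _ HB), bs_sub; assumption.
  - rewrite (bs_homog _ _ HB) by (apply bs_sub; assumption).
    rewrite Cmod_R, Rabs_left by lra. lra.
Qed.

Lemma bs_lim_consecutive (u : nat -> cseq) (g : cseq) :
  (forall k, SB (u k)) -> SB g -> is_lim_seq (fun k => NB (seq_sub (u k) g)) 0 ->
  is_lim_seq (fun k => NB (seq_sub (u k) (u (S k)))) 0.
Proof.
  intros Hu Hg Hlim.
  apply is_lim_seq_le_le with (fun _ => 0)
    (fun k => NB (seq_sub (u k) g) + NB (seq_sub (u (S k)) g)).
  - intros k. split; [apply (bs_nonneg _ _ HB), bs_sub; apply Hu|].
    apply bs_sub_le; auto.
  - apply is_lim_seq_const.
  - replace (Finite 0) with (Rbar_plus 0 0) by (simpl; f_equal; ring).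
    apply is_lim_seq_plus'; [exact Hlim|].
    apply (is_lim_seq_incr_1 (fun k => NB (seq_sub (u k) g))), Hlim.
Qed.

End BanachSeqSpace.

Definition monomial (n : nat) : cseq := fun m => if Nat.eqb m n then RtoC 1 else RtoC 0.

Lemma monomial_in_Hinf n : in_Hinf (monomial n) /\ sup_bounded_by (monomial n) 1.
Proof.
  assert (Hz : forall z : C, forall m, m <> n -> Cmult (monomial n m) (Cpow z m) = zero).
  { intros z m Hm. unfold monomial. apply Nat.eqb_neq in Hm. rewrite Hm.
    apply injective_projections; simpl; ring. }
  assert (Hb : sup_bounded_by (monomial n) 1).
  { intros z Hz1 l Hl.
    rewrite (filterlim_locally_unique _ _ _ Hl (is_series_single _ n (Hz z))).
    unfold monomial. rewrite Nat.eqb_refl, Cmod_mult, Cmod_1, Cmod_pow, Rmult_1_l.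
    rewrite <- (pow1 n). apply pow_incr. split; [apply Cmod_ge_0|lra]. }
  split; [split|exact Hb].
  - intros z _. eexists. exact (is_series_single _ n (Hz z)).
  - exists 1. exact Hb.
Qed.

Lemma monomial_l2 n : in_l2 (monomial n) /\ l2_norm (monomial n) = 1.
Proof.
  assert (Hs : is_series (fun m => Cmod (monomial n m) ^ 2) 1).
  { replace 1 with (Cmod (monomial n n) ^ 2)
      by (unfold monomial; rewrite Nat.eqb_refl, Cmod_1; ring).
    apply (is_series_single (fun m => Cmod (monomial n m) ^ 2)).
    intros m Hm. unfold monomial. apply Nat.eqb_neq in Hm. rewrite Hm, Cmod_0. simpl.
    rewrite Rmult_0_l. reflexivity. }
  split; [eexists; exact Hs|].
  unfold l2_norm. rewrite (is_series_unique _ _ Hs). apply sqrt_1.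
Qed.

Lemma monomial_norm_bounds SX NX : Hinf_incl SX NX -> incl_l2 SX NX ->
  exists KH, forall n, SX (monomial n) /\ 0 < NX (monomial n) <= KH.
Proof.
  intros [KH [_ HH]] [K2 [HK2 HX2]]. exists KH. intros n.
  destruct (monomial_in_Hinf n) as [Hi Hb]. destruct (HH _ _ Hi Hb) as [HS Hle].
  destruct (monomial_l2 n) as [_ Hl]. destruct (HX2 _ HS) as [_ Hl2]. rewrite Hl in Hl2.
  split; [exact HS|]. split; [|lra].
  apply Rnot_le_lt. intros Hnp. pose proof (Rmult_le_compat_l K2 _ 0 HK2 Hnp). lra.
Qed.

Lemma seq_sub_multiplier_monomial (lam : cseq) (c c' : C) n n' : n <> n' ->
  seq_sub (multiplier lam (seq_scal c (monomial n)))
          (multiplier lam (seq_scal c' (monomial n'))) n = (lam n * c)%C.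
Proof.
  intros Hn. apply Nat.eqb_neq in Hn.
  unfold seq_sub, multiplier, seq_scal, monomial. rewrite Nat.eqb_refl, Hn.
  apply injective_projections; simpl; ring.
Qed.

Lemma normalized_in_unit_ball SX NX (a : cseq) : Banach_seq_space SX NX ->
  SX a -> 0 < NX a -> SX (seq_scal (RtoC (/ NX a)) a) /\ NX (seq_scal (RtoC (/ NX a)) a) <= 1.
Proof.
  intros HX Ha Hp. split; [apply (bs_scal _ _ HX), Ha|].
  rewrite (bs_homog _ _ HX), Cmod_R, Rabs_pos_eq, Rinv_l
    by (lra || exact Ha || (left; apply Rinv_0_lt_compat, Hp)).
  lra.
Qed.

Lemma Cmod_le_of_scaled (z : C) c KH A : 0 < c <= KH ->
  Cmod (z * RtoC (/ c)) <= A -> Cmod z <= KH * A.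
Proof.
  intros [Hc HcK] Hz. rewrite Cmod_mult, Cmod_R, Rabs_pos_eq in Hz
    by (left; apply Rinv_0_lt_compat, Hc).
  replace (Cmod z) with (Cmod z * / c * c) by (field; lra).
  rewrite Rmult_comm. apply Rmult_le_compat; [lra| |exact HcK|exact Hz].
  apply Rmult_le_pos; [apply Cmod_ge_0|left; apply Rinv_0_lt_compat, Hc].
Qed.

Lemma multiplier_vanishes_along SX NX SE NE lam :
  Banach_seq_space SX NX -> Hinf_incl SX NX -> incl_l2 SX NX ->
  Banach_seq_space SE NE -> incl_linf SE NE ->
  (forall a, SX a -> SE (multiplier lam a)) ->
  compact_multiplier SX NX SE NE lam ->
  forall nn, increasing_seq nn ->
    exists phi, increasing_seq phi /\ is_lim_seq (fun k => Cmod (lam (nn (phi k)))) 0.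
Proof.
  intros HX HH H2 HE [Ki [HKi HEi]] HM Hc nn Hnn.
  destruct (monomial_norm_bounds SX NX HH H2) as [KH Hmono].
  set (f := fun k => seq_scal (RtoC (/ NX (monomial (nn k)))) (monomial (nn k))).
  assert (Hf : forall k, SX (f k) /\ NX (f k) <= 1).
  { intros k. apply normalized_in_unit_ball; [exact HX|apply Hmono|apply Hmono]. }
  destruct (Hc f (fun k => proj1 (Hf k)) (fun k => proj2 (Hf k)))
    as [phi [g [Hphi [Hg Hlim]]]].
  set (u := fun k => multiplier lam (f (phi k))).
  assert (Hu : forall k, SE (u k)) by (intros k; apply HM, Hf).
  exists phi. split; [exact Hphi|].
  apply is_lim_seq_le_le with (fun _ => 0)
    (fun k => KH * (Ki * NE (seq_sub (u k) (u (S k))))).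
  - intros k. split; [apply Cmod_ge_0|].
    apply Cmod_le_of_scaled with (NX (monomial (nn (phi k)))); [apply Hmono|].
    rewrite <- (seq_sub_multiplier_monomial lam _ (RtoC (/ NX (monomial (nn (phi (S k))))))
                  _ (nn (phi (S k)))).
    + apply HEi, (bs_sub SE NE HE); apply Hu.
    + pose proof (increasing_seq_lt nn Hnn _ _ (Hphi k)). lia.
  - apply is_lim_seq_const.
  - replace (Finite 0) with (Rbar_mult KH (Rbar_mult Ki 0)) by (simpl; f_equal; ring).
    apply is_lim_seq_scal_l, is_lim_seq_scal_l, (bs_lim_consecutive SE NE HE u g Hu Hg Hlim).
Qed.

Theorem theorem2p5
  (SX : cseq -> Prop) (NX : cseq -> R)
  (SE : cseq -> Prop) (NE : cseq -> R) (lam : cseq) :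
  Banach_space_of_analytic SX NX ->
  Hinf_incl SX NX -> incl_l2 SX NX ->
  Banach_seq_lattice SE NE -> order_continuous SE NE ->
  l2_incl SE NE -> incl_linf SE NE ->
  bounded_multiplier SX NX SE NE lam ->
  (compact_multiplier SX NX SE NE lam <->
   LimSup_seq (fun n => Cmod (lam n)) = Finite 0).
Proof.
  intros [HX _] HH H2 [HE _] _ Hl2 Hinf [HM _].
  rewrite LimSup_seq_nonneg_eq0 by (intros; apply Cmod_ge_0).
  split.
  - intros Hc. apply is_lim_seq_of_subsequences.
    exact (multiplier_vanishes_along SX NX SE NE lam HX HH H2 HE Hinf HM Hc).
  - exact (compact_multiplier_of_vanishing SX NX SE NE lam HE Hl2 H2 HM).
Qed.
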